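(* Let $A\in\mathbb R^{m\times N}$, let $\mathcal B=(\mathcal B_1,\dots,\mathcal B_B)$ be a block structure with weights $\omega=(\omega_1,\dots,\omega_B)$, $\omega_i\ge1$. Let $s\ge2\|\omega\|_\infty^2$ and assume $A$ satisfies the WBRIP of order $2s$ with constant $\delta_{2s}<\frac{1}{2\sqrt2+1}$. For $x\in\mathbb R^N$ let $y=Ax+e$ with $\|e\|_2\le\eta$, and let $$\hat x\in\arg\min_{z\in\mathbb R^N}\|z\|_{2,1}^{(\omega)}\quad\text{s.t. }\|Az-y\|_2\le\eta.$$ Then $$\|x-\hat x\|_{2,1}^{(\omega)}\le c_\delta\,\sigma_s(x)_{2,1}^{(\omega)}+d_\delta\sqrt s\,\eta,\qquad \|x-\hat x\|_2\le\frac{c_\delta}{\sqrt s}\sigma_s(x)_{2,1}^{(\omega)}+d_\delta\eta,$$ where $c_\delta=\frac{2(1+\delta_{2s}(2\sqrt2-3))^2}{(1-\delta_{2s})(1-\delta_{2s}(2\sqrt2+1))}$ and $d_\delta=\frac{2(3+\delta_{2s}(2\sqrt2-3))\sqrt{1+\delta_{2s}}}{(1-\delta_{2s})(1-\delta_{2s}(2\sqrt2+1))}$.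
   Context: Block structure: $\mathcal B=(\mathcal B_1,\dots,\mathcal B_B)$ partition of $\{1,\dots,N\}$; $x[b]=x[\mathcal B_b]$. Weights $\omega_b\ge1$, $\|\omega\|_\infty=\max_b\omega_b$, $\omega(S)=\sum_{b\in S}\omega_b^2$. $\|x\|_{2,p}^{(\omega)}=\big(\sum_b\omega_b^{2-p}\|x[b]\|_2^p\big)^{1/p}$. $\|x\|_0^{(\omega)}=\omega(\{b:x[b]\ne0\})$. $\sigma_s(x)_{2,1}^{(\omega)}=\inf\{\|x-z\|_{2,1}^{(\omega)}:\|z\|_0^{(\omega)}\le s\}$. Definition (WBRIP): $A$ satisfies the weighted block restricted isometry property of order $t\ge\|\omega\|_\infty$ with constant $\delta\in(0,1)$ if $(1-\delta)\|x\|_2^2\le\|Ax\|_2^2\le(1+\delta)\|x\|_2^2$ for all $x$ with $\|x\|_0^{(\omega)}\le t$; the smallest such $\delta$ is denoted $\delta_t$. *)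

From Stdlib Require Import Reals Lra Classical ClassicalEpsilon.
Open Scope R_scope.

(* Vectors in R^n are functions nat -> R; only indices 0..n-1 matter. *)

Fixpoint fsum (n : nat) (f : nat -> R) : R :=
  match n with
  | O => 0
  | S k => fsum k f + f k
  end.

Definition norm2 (N : nat) (x : nat -> R) : R := sqrt (fsum N (fun j => x j ^ 2)).

Definition matvec (N : nat) (A : nat -> nat -> R) (x : nat -> R) : nat -> R :=
  fun i => fsum N (fun j => A i j * x j).

Definition vsub (x z : nat -> R) : nat -> R := fun j => x j - z j.
Definition vadd (x z : nat -> R) : nat -> R := fun j => x j + z j.

(* Block structure: blk j = index of the block containing coordinate j.
   It is a partition of {0..N-1} into B nonempty blocks B_0..B_{B-1}. *)
Definition is_block_structure (N B : nat) (blk : nat -> nat) : Prop :=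
  (forall j, (j < N)%nat -> (blk j < B)%nat) /\
  (forall b, (b < B)%nat -> exists j, (j < N)%nat /\ blk j = b).

Definition blocknorm (N : nat) (blk : nat -> nat) (x : nat -> R) (b : nat) : R :=
  sqrt (fsum N (fun j => if Nat.eq_dec (blk j) b then x j ^ 2 else 0)).

Definition w21norm (N B : nat) (blk : nat -> nat) (w : nat -> R) (x : nat -> R) : R :=
  fsum B (fun b => w b * blocknorm N blk x b).

Definition block_nonzero (N : nat) (blk : nat -> nat) (x : nat -> R) (b : nat) : Prop :=
  exists j, (j < N)%nat /\ blk j = b /\ x j <> 0.

Definition wsetweight (B : nat) (w : nat -> R) (S : nat -> Prop) : R :=
  fsum B (fun b => if excluded_middle_informative (S b) then w b ^ 2 else 0).

Definition w0norm (N B : nat) (blk : nat -> nat) (w : nat -> R) (x : nat -> R) : R :=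
  wsetweight B w (block_nonzero N blk x).

Fixpoint wmax (B : nat) (w : nat -> R) : R :=
  match B with
  | O => 0
  | S k => Rmax (wmax k w) (w k)
  end.

Definition is_glb (E : R -> Prop) (m : R) : Prop :=
  (forall x, E x -> m <= x) /\ (forall m', (forall x, E x -> m' <= x) -> m' <= m).

Definition Rinf (E : R -> Prop) : R := epsilon (inhabits 0) (is_glb E).

Definition sigma_s (N B : nat) (blk : nat -> nat) (w : nat -> R) (s : R) (x : nat -> R) : R :=
  Rinf (fun r => exists z, w0norm N B blk w z <= s /\ r = w21norm N B blk w (vsub x z)).

Definition WBRIP (N B : nat) (blk : nat -> nat) (w : nat -> R) (m : nat)
    (A : nat -> nat -> R) (t delta : R) : Prop :=
  t >= wmax B w /\ 0 < delta < 1 /\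
  forall x, w0norm N B blk w x <= t ->
    (1 - delta) * norm2 N x ^ 2 <= norm2 m (matvec N A x) ^ 2 /\
    norm2 m (matvec N A x) ^ 2 <= (1 + delta) * norm2 N x ^ 2.

Definition delta_t (N B : nat) (blk : nat -> nat) (w : nat -> R) (m : nat)
    (A : nat -> nat -> R) (t : R) : R :=
  Rinf (fun d => WBRIP N B blk w m A t d).

From Stdlib Require Import Reals Lra Lia Wf_nat List Permutation Sorted
  FunctionalExtensionality Classical ClassicalEpsilon.
Open Scope R_scope.

(* Let v = x - xhat.  Feasibility of x and xhat gives ||A v||_2 <= 2 eta, and
   minimality of xhat gives the cone condition
     ||v_{S^c}||_{2,1} <= ||v_S||_{2,1} + 2 ||x_{S^c}||_{2,1}
   for the block support S of any z with ||z||_0 <= s.  The WBRIP of order 2s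
   gives the robust null space property
     (1 - delta) ||v_S||_2 <= (2 delta / sqrt s) ||v_{S^c}||_{2,1} + sqrt (1 + delta) ||A v||_2
   whenever omega(S) <= s: sort the blocks outside S by decreasing ||v[b]||_2 / omega_b
   and cut them greedily into chunks of weight at most s.  As omega_b^2 <= s/2, every
   chunk but the last weighs more than s/2, so the ratios in the next chunk are at
   most 2 ||v_chunk||_{2,1} / s; this bounds the l2 norm of each chunk by (2,1)-norms,
   and the RIP bounds its interaction with v_S.  Together these bound ||v||_{2,1} and
   ||v||_2 by the (2,1)-distance from x to z, hence by sigma_s; the constants c_delta and
   d_delta dominate the ones obtained, by polynomial inequalities in delta and sqrt 2
   valid for delta < 1 / (2 sqrt 2 + 1). *)

Lemma fsum_ext n f g : (forall i, (i < n)%nat -> f i = g i) -> fsum n f = fsum n g.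
Proof.
  induction n as [|n IH]; intros H; simpl; [reflexivity|].
  rewrite IH by (intros; apply H; lia). rewrite H by lia. reflexivity.
Qed.

Lemma fsum_add n f g : fsum n (fun i => f i + g i) = fsum n f + fsum n g.
Proof. induction n as [|n IH]; simpl; [lra | rewrite IH; lra]. Qed.

Lemma fsum_scal n c f : fsum n (fun i => c * f i) = c * fsum n f.
Proof. induction n as [|n IH]; simpl; [lra | rewrite IH; lra]. Qed.

Lemma fsum_opp n f : fsum n (fun i => - f i) = - fsum n f.
Proof. induction n as [|n IH]; simpl; [lra | rewrite IH; lra]. Qed.

Lemma fsum_zero n : fsum n (fun _ => 0) = 0.
Proof. induction n as [|n IH]; simpl; [lra | rewrite IH; lra]. Qed.

Lemma fsum_le n f g : (forall i, (i < n)%nat -> f i <= g i) -> fsum n f <= fsum n g.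
Proof.
  induction n as [|n IH]; intros H; simpl; [lra|].
  assert (fsum n f <= fsum n g) by (apply IH; intros; apply H; lia).
  assert (f n <= g n) by (apply H; lia).
  lra.
Qed.

Lemma fsum_nonneg n f : (forall i, (i < n)%nat -> 0 <= f i) -> 0 <= fsum n f.
Proof. intros H. rewrite <- (fsum_zero n). now apply fsum_le. Qed.

Lemma fsum_swap n k (F : nat -> nat -> R) :
  fsum n (fun i => fsum k (F i)) = fsum k (fun j => fsum n (fun i => F i j)).
Proof.
  induction n as [|n IH]; simpl.
  - symmetry. apply fsum_zero.
  - rewrite IH, <- fsum_add. reflexivity.
Qed.

Lemma fsum_indicator n c g :
  fsum n (fun b => if Nat.eq_dec c b then g b else 0) = if Nat.ltb c n then g c else 0.
Proof.
  induction n as [|n IH]; simpl; [reflexivity|]. rewrite IH.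
  destruct (Nat.eq_dec c n); destruct (Nat.ltb_spec c n); destruct (Nat.ltb_spec c (S n));
    subst; try lia; lra.
Qed.

Lemma pow2_le_cancel x y : 0 <= y -> x ^ 2 <= y ^ 2 -> x <= y.
Proof. intros. nra. Qed.

Lemma le_mul_of_amgm X a b c : 0 <= a -> 0 <= b -> 0 <= c ->
  (forall T, 0 < T -> X <= c * (T * a ^ 2 + b ^ 2 / T) / 2) -> X <= c * a * b.
Proof.
  intros Ha Hb Hc H. apply Rle_plus_epsilon. intros eps Heps.
  (* T = (b + t) / (a + t) makes the bound at most c (a b + t (a + b) / 2) *)
  set (t := eps / (c * (a + b) + 1)).
  assert (Ht : 0 < t) by (apply Rdiv_lt_0_compat; nra).
  assert (HT := H ((b + t) / (a + t)) ltac:(apply Rdiv_lt_0_compat; lra)).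
  replace ((b + t) / (a + t) * a ^ 2 + b ^ 2 / ((b + t) / (a + t)))
    with (a * (b + t) * (a / (a + t)) + b * (a + t) * (b / (b + t))) in HT by (field; lra).
  assert (Ea : a / (a + t) * (a + t) = a) by (field; lra).
  assert (Eb : b / (b + t) * (b + t) = b) by (field; lra).
  assert (Et : t * (c * (a + b) + 1) = eps) by (unfold t; field; nra).
  assert (a * (b + t) * (a / (a + t)) <= a * (b + t)).
  { assert (a / (a + t) <= 1) by nra. assert (0 <= a * (b + t)) by nra. nra. }
  assert (b * (a + t) * (b / (b + t)) <= b * (a + t)).
  { assert (b / (b + t) <= 1) by nra. assert (0 <= b * (a + t)) by nra. nra. }
  assert (c * (t * (a + b)) <= eps) by nra.
  nra.
Qed.

Definition dot n (p q : nat -> R) : R := fsum n (fun i => p i * q i).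

Definition vscale (c : R) (u : nat -> R) : nat -> R := fun j => c * u j.

Lemma norm2_nonneg n p : 0 <= norm2 n p.
Proof. apply sqrt_pos. Qed.

Lemma norm2_sq n p : norm2 n p ^ 2 = dot n p p.
Proof.
  unfold norm2, dot. rewrite pow2_sqrt by (apply fsum_nonneg; intros; apply pow2_ge_0).
  apply fsum_ext. intros. ring.
Qed.

Lemma norm2_ext n p q : (forall i, (i < n)%nat -> p i = q i) -> norm2 n p = norm2 n q.
Proof. intros H. unfold norm2. f_equal. apply fsum_ext. intros i Hi. now rewrite H. Qed.

Lemma norm2_opp n p : norm2 n (vscale (-1) p) = norm2 n p.
Proof. unfold norm2, vscale. f_equal. apply fsum_ext. intros. ring. Qed.

Lemma norm2_le_of_dot n p a : 0 <= a -> dot n p p <= a ^ 2 -> norm2 n p <= a.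
Proof. intros. apply pow2_le_cancel; [assumption|]. now rewrite norm2_sq. Qed.

Lemma cauchy_schwarz n p q : dot n p q <= norm2 n p * norm2 n q.
Proof.
  rewrite <- (Rmult_1_l (norm2 n p)).
  apply le_mul_of_amgm; try apply norm2_nonneg; try lra. intros T HT.
  rewrite !norm2_sq. unfold dot.
  replace (1 * (T * fsum n (fun i => p i * p i) + fsum n (fun i => q i * q i) / T) / 2)
    with (fsum n (fun i => p i * q i + (T * p i - q i) ^ 2 / (2 * T))).
  2: { rewrite fsum_add.
       rewrite (fsum_ext n (fun i => (T * p i - q i) ^ 2 / (2 * T))
                 (fun i => T / 2 * (p i * p i) + / (2 * T) * (q i * q i) + (-1) * (p i * q i)))
         by (intros; field; lra).
       rewrite !fsum_add, !fsum_scal. field. lra. }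
  apply fsum_le. intros i _.
  assert (0 <= (T * p i - q i) ^ 2 / (2 * T))
    by (apply Rmult_le_pos; [apply pow2_ge_0 | left; apply Rinv_0_lt_compat; lra]).
  lra.
Qed.

Lemma dot_sym n p q : dot n p q = dot n q p.
Proof. unfold dot. apply fsum_ext. intros. ring. Qed.

Lemma dot_add_r n p q1 q2 : dot n p (vadd q1 q2) = dot n p q1 + dot n p q2.
Proof. unfold dot, vadd. rewrite <- fsum_add. apply fsum_ext. intros. ring. Qed.

Lemma dot_scal_r n p q c : dot n p (vscale c q) = c * dot n p q.
Proof. unfold dot, vscale. rewrite <- fsum_scal. apply fsum_ext. intros. ring. Qed.

Lemma dot_zero_r n p : dot n p (fun _ => 0) = 0.
Proof.
  unfold dot. transitivity (fsum n (fun _ => 0)); [|apply fsum_zero].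
  apply fsum_ext. intros. ring.
Qed.

Lemma norm2_add_le n p q : norm2 n (vadd p q) <= norm2 n p + norm2 n q.
Proof.
  assert (Hp := norm2_nonneg n p). assert (Hq := norm2_nonneg n q).
  apply norm2_le_of_dot; [lra|].
  replace (dot n (vadd p q) (vadd p q)) with (dot n p p + 2 * dot n p q + dot n q q).
  2: { unfold dot, vadd. rewrite <- fsum_scal, <- !fsum_add. apply fsum_ext. intros. ring. }
  rewrite <- !norm2_sq. assert (H := cauchy_schwarz n p q). nra.
Qed.

Lemma norm2_sub_le n p q : norm2 n (vsub p q) <= norm2 n p + norm2 n q.
Proof.
  rewrite <- (norm2_opp n q). replace (vsub p q) with (vadd p (vscale (-1) q)).
  - apply norm2_add_le.
  - apply functional_extensionality. intros. unfold vsub, vadd, vscale. ring.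
Qed.

Lemma matvec_add N A u v : matvec N A (vadd u v) = vadd (matvec N A u) (matvec N A v).
Proof.
  apply functional_extensionality. intros i. unfold matvec, vadd.
  rewrite <- fsum_add. apply fsum_ext. intros. ring.
Qed.

Lemma matvec_scal N A c u : matvec N A (vscale c u) = vscale c (matvec N A u).
Proof.
  apply functional_extensionality. intros i. unfold matvec, vscale.
  rewrite <- fsum_scal. apply fsum_ext. intros. ring.
Qed.

Lemma matvec_sub N A u v : matvec N A (vsub u v) = vsub (matvec N A u) (matvec N A v).
Proof.
  apply functional_extensionality. intros i. unfold matvec, vsub.
  unfold Rminus. rewrite <- fsum_opp, <- fsum_add. apply fsum_ext. intros. ring.
Qed.

Lemma matvec_ext N A u v : (forall j, (j < N)%nat -> u j = v j) -> matvec N A u = matvec N A v.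
Proof.
  intros H. apply functional_extensionality. intros i. unfold matvec.
  apply fsum_ext. intros j Hj. now rewrite H.
Qed.

Lemma matvec_zero N A : matvec N A (fun _ => 0) = fun _ => 0.
Proof.
  apply functional_extensionality. intros i. unfold matvec.
  transitivity (fsum N (fun _ => 0)); [|apply fsum_zero].
  apply fsum_ext. intros. ring.
Qed.

Lemma fsum_if_disjoint_union n (f : nat -> R) (P P1 P2 : nat -> bool) :
  (forall b, (b < n)%nat -> P b = orb (P1 b) (P2 b)) ->
  (forall b, (b < n)%nat -> andb (P1 b) (P2 b) = false) ->
  fsum n (fun b => if P b then f b else 0)
  = fsum n (fun b => if P1 b then f b else 0) + fsum n (fun b => if P2 b then f b else 0).
Proof.
  intros Hor Hdisj. rewrite <- fsum_add. apply fsum_ext. intros b Hb.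
  rewrite Hor by assumption. specialize (Hdisj b Hb).
  destruct (P1 b), (P2 b); simpl in *; try discriminate; ring.
Qed.

Lemma fsum_if_nonneg n (f : nat -> R) (P : nat -> bool) :
  (forall b, (b < n)%nat -> 0 <= f b) -> 0 <= fsum n (fun b => if P b then f b else 0).
Proof. intros H. apply fsum_nonneg. intros b Hb. destruct (P b); [auto | lra]. Qed.

Section Blocks.

Variables (N B : nat) (blk : nat -> nat) (w : nat -> R).
Hypothesis Hblk : forall j, (j < N)%nat -> (blk j < B)%nat.
Hypothesis Hw : forall b, (b < B)%nat -> 1 <= w b.

Definition restrict (P : nat -> bool) (u : nat -> R) : nat -> R :=
  fun j => if P (blk j) then u j else 0.

Definition block_weight (P : nat -> bool) : R :=
  fsum B (fun b => if P b then w b ^ 2 else 0).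

Definition w21_on (P : nat -> bool) (u : nat -> R) : R :=
  fsum B (fun b => if P b then w b * blocknorm N blk u b else 0).

Lemma blocknorm_nonneg u b : 0 <= blocknorm N blk u b.
Proof. apply sqrt_pos. Qed.

Lemma blocknorm_as_norm2 u b :
  blocknorm N blk u b = norm2 N (fun j => if Nat.eq_dec (blk j) b then u j else 0).
Proof.
  unfold blocknorm, norm2. f_equal. apply fsum_ext. intros j _.
  destruct (Nat.eq_dec (blk j) b); [reflexivity | ring].
Qed.

Lemma blocknorm_ext u u' b :
  (forall j, (j < N)%nat -> blk j = b -> u j = u' j) -> blocknorm N blk u b = blocknorm N blk u' b.
Proof.
  intros H. unfold blocknorm. f_equal. apply fsum_ext. intros j Hj.
  destruct (Nat.eq_dec (blk j) b); [now rewrite H | reflexivity].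
Qed.

Lemma blocknorm_add_le p q b :
  blocknorm N blk (vadd p q) b <= blocknorm N blk p b + blocknorm N blk q b.
Proof.
  rewrite !blocknorm_as_norm2. eapply Rle_trans; [|apply norm2_add_le]. right.
  apply norm2_ext. intros j _. unfold vadd. destruct (Nat.eq_dec (blk j) b); [reflexivity | ring].
Qed.

Lemma blocknorm_sub_le p q b :
  blocknorm N blk (vsub p q) b <= blocknorm N blk p b + blocknorm N blk q b.
Proof.
  rewrite !blocknorm_as_norm2. eapply Rle_trans; [|apply norm2_sub_le]. right.
  apply norm2_ext. intros j _. unfold vsub. destruct (Nat.eq_dec (blk j) b); [reflexivity | ring].
Qed.

Lemma blocknorm_restrict P u b :
  blocknorm N blk (restrict P u) b = if P b then blocknorm N blk u b else 0.
Proof.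
  destruct (P b) eqn:E.
  - apply blocknorm_ext. intros j _ <-. unfold restrict. now rewrite E.
  - rewrite (blocknorm_ext _ (fun _ => 0)).
    + unfold blocknorm. transitivity (sqrt 0); [|apply sqrt_0]. f_equal.
      transitivity (fsum N (fun _ => 0)); [|apply fsum_zero].
      apply fsum_ext. intros j _. destruct (Nat.eq_dec (blk j) b); [ring | reflexivity].
    + intros j _ <-. unfold restrict. now rewrite E.
Qed.

Lemma norm2_sq_blocks u : norm2 N u ^ 2 = fsum B (fun b => blocknorm N blk u b ^ 2).
Proof.
  unfold norm2. rewrite pow2_sqrt by (apply fsum_nonneg; intros; apply pow2_ge_0).
  rewrite (fsum_ext B _ (fun b => fsum N (fun j => if Nat.eq_dec (blk j) b then u j ^ 2 else 0))).
  2: { intros b _. unfold blocknorm. rewrite pow2_sqrt; [reflexivity|].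
       apply fsum_nonneg. intros j _. destruct (Nat.eq_dec (blk j) b); [apply pow2_ge_0 | lra]. }
  rewrite <- fsum_swap. apply fsum_ext. intros j Hj.
  rewrite (fsum_indicator B (blk j) (fun _ => u j ^ 2)).
  destruct (Nat.ltb_spec (blk j) B); [reflexivity|]. specialize (Hblk j Hj). lia.
Qed.

Lemma norm2_restrict_sq P u :
  norm2 N (restrict P u) ^ 2 = fsum B (fun b => if P b then blocknorm N blk u b ^ 2 else 0).
Proof.
  rewrite norm2_sq_blocks. apply fsum_ext. intros b _.
  rewrite blocknorm_restrict. destruct (P b); [reflexivity | ring].
Qed.

Lemma w21_on_nonneg P u : 0 <= w21_on P u.
Proof.
  apply fsum_if_nonneg. intros b Hb.
  assert (Hwb := Hw b Hb). assert (Hub := blocknorm_nonneg u b). nra.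
Qed.

Lemma w21norm_nonneg u : 0 <= w21norm N B blk w u.
Proof. apply (w21_on_nonneg (fun _ => true)). Qed.

Lemma w21norm_split P u : w21norm N B blk w u = w21_on P u + w21_on (fun b => negb (P b)) u.
Proof.
  apply (fsum_if_disjoint_union B _ (fun _ => true)); intros b _; now destruct (P b).
Qed.

Lemma w21_on_le_w21norm P u : w21_on P u <= w21norm N B blk w u.
Proof.
  rewrite (w21norm_split P u). assert (H := w21_on_nonneg (fun b => negb (P b)) u). lra.
Qed.

Lemma w21_on_triangle P u1 u2 u3 :
  (forall b, (b < B)%nat -> blocknorm N blk u1 b <= blocknorm N blk u2 b + blocknorm N blk u3 b) ->
  w21_on P u1 <= w21_on P u2 + w21_on P u3.
Proof.
  intros H. unfold w21_on. rewrite <- fsum_add. apply fsum_le. intros b Hb.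
  destruct (P b); [|lra]. specialize (H b Hb). assert (Hwb := Hw b Hb). nra.
Qed.

Lemma w21_on_cauchy_schwarz P u : w21_on P u <= sqrt (block_weight P) * norm2 N (restrict P u).
Proof.
  assert (H := cauchy_schwarz B (fun b => if P b then w b else 0)
                 (fun b => if P b then blocknorm N blk u b else 0)).
  unfold dot, norm2 at 1 2 in H.
  replace (norm2 N (restrict P u))
    with (sqrt (fsum B (fun b => (if P b then blocknorm N blk u b else 0) ^ 2))).
  2: { rewrite <- (sqrt_pow2 (norm2 N (restrict P u))) by apply norm2_nonneg.
       rewrite norm2_restrict_sq. f_equal. apply fsum_ext. intros b _. destruct (P b); ring. }
  unfold w21_on, block_weight.
  rewrite (fsum_ext B (fun b => if P b then w b * _ else 0)
             (fun b => (if P b then w b else 0) * (if P b then blocknorm N blk u b else 0)))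
    by (intros b _; destruct (P b); ring).
  rewrite (fsum_ext B (fun b => if P b then w b ^ 2 else 0) (fun b => (if P b then w b else 0) ^ 2))
    by (intros b _; destruct (P b); ring).
  exact H.
Qed.

Lemma bweight_mul_le_w21_on P u r :
  (forall b, (b < B)%nat -> P b = true -> r * w b <= blocknorm N blk u b) ->
  r * block_weight P <= w21_on P u.
Proof.
  intros H. unfold block_weight, w21_on. rewrite <- fsum_scal. apply fsum_le. intros b Hb.
  specialize (H b Hb). destruct (P b); [|lra]. specialize (H eq_refl).
  assert (Hwb := Hw b Hb). nra.
Qed.

Lemma norm2_restrict_sq_le P u r :
  (forall b, (b < B)%nat -> P b = true -> blocknorm N blk u b <= r * w b) ->
  norm2 N (restrict P u) ^ 2 <= r * w21_on P u.
Proof.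
  intros H. rewrite norm2_restrict_sq. unfold w21_on. rewrite <- fsum_scal.
  apply fsum_le. intros b Hb. specialize (H b Hb). destruct (P b); [|lra].
  specialize (H eq_refl). assert (Hub := blocknorm_nonneg u b). assert (Hwb := Hw b Hb). nra.
Qed.

Lemma w0norm_restrict_le P u : w0norm N B blk w (restrict P u) <= block_weight P.
Proof.
  unfold w0norm, wsetweight, block_weight. apply fsum_le. intros b _.
  destruct (excluded_middle_informative (block_nonzero N blk (restrict P u) b))
    as [[j [_ [<- Hu]]] | _].
  - unfold restrict in Hu. destruct (P (blk j)); [lra | congruence].
  - destruct (P b); [apply pow2_ge_0 | lra].
Qed.

Lemma w0norm_add_le u v :
  w0norm N B blk w (vadd u v) <= w0norm N B blk w u + w0norm N B blk w v.
Proof.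
  unfold w0norm, wsetweight. rewrite <- fsum_add. apply fsum_le. intros b _.
  assert (Hp := pow2_ge_0 (w b)).
  destruct (excluded_middle_informative (block_nonzero N blk (vadd u v) b)) as [[j [Hj [Hb Huv]]]|];
    destruct (excluded_middle_informative (block_nonzero N blk u b)) as [|Hu];
    destruct (excluded_middle_informative (block_nonzero N blk v b)) as [|Hv]; try lra.
  unfold vadd in Huv. destruct (Req_dec (u j) 0); [|exfalso; apply Hu; now exists j].
  destruct (Req_dec (v j) 0); [lra | exfalso; apply Hv; now exists j].
Qed.

Lemma w0norm_scal_le c u : w0norm N B blk w (vscale c u) <= w0norm N B blk w u.
Proof.
  unfold w0norm, wsetweight. apply fsum_le. intros b _.
  assert (Hp := pow2_ge_0 (w b)).
  destruct (excluded_middle_informative (block_nonzero N blk (vscale c u) b)) as [[j [Hj [Hb Hu]]]|];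
    destruct (excluded_middle_informative (block_nonzero N blk u b)) as [|Hu']; try lra.
  exfalso. apply Hu'. exists j. unfold vscale in Hu. repeat split; auto.
  intros E. apply Hu. rewrite E. ring.
Qed.

Lemma w0norm_zero : w0norm N B blk w (fun _ => 0) = 0.
Proof.
  unfold w0norm, wsetweight. transitivity (fsum B (fun _ => 0)); [|apply fsum_zero].
  apply fsum_ext. intros b _.
  destruct (excluded_middle_informative (block_nonzero N blk (fun _ => 0) b))
    as [[j [_ [_ H]]]|]; [lra | reflexivity].
Qed.

End Blocks.

Lemma norm2_sq_disjoint_add n c u v : (forall j, (j < n)%nat -> u j * v j = 0) ->
  norm2 n (vadd (vscale c u) v) ^ 2 = c ^ 2 * norm2 n u ^ 2 + norm2 n v ^ 2.
Proof.
  intros H. rewrite !norm2_sq. unfold dot, vadd, vscale.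
  rewrite <- (fsum_scal n (c ^ 2)), <- fsum_add. apply fsum_ext. intros j Hj.
  replace ((c * u j + v j) * (c * u j + v j)) with (c ^ 2 * (u j * u j) + v j * v j + 2 * c * (u j * v j))
    by ring.
  rewrite (H j Hj). ring.
Qed.

Lemma norm2_sq_disjoint_sum n u v : (forall j, (j < n)%nat -> u j * v j = 0) ->
  norm2 n (vadd u v) ^ 2 = norm2 n u ^ 2 + norm2 n v ^ 2.
Proof.
  intros H. replace (vadd u v) with (vadd (vscale 1 u) v).
  - rewrite norm2_sq_disjoint_add by exact H. ring.
  - apply functional_extensionality. intros j. unfold vadd, vscale. ring.
Qed.

Lemma norm2_le_disjoint_sum n u v : (forall j, (j < n)%nat -> u j * v j = 0) ->
  norm2 n u <= norm2 n (vadd u v).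
Proof.
  intros H. apply pow2_le_cancel; [apply norm2_nonneg|].
  rewrite norm2_sq_disjoint_sum by exact H. assert (H0 := pow2_ge_0 (norm2 n v)). lra.
Qed.

Definition rip_bounds N B blk w m A (t delta : R) : Prop :=
  forall u, w0norm N B blk w u <= t ->
    (1 - delta) * norm2 N u ^ 2 <= norm2 m (matvec N A u) ^ 2 <= (1 + delta) * norm2 N u ^ 2.

Section RIP.

Variables (N B : nat) (blk : nat -> nat) (w : nat -> R) (m : nat) (A : nat -> nat -> R).
Variables (s delta : R).
Hypothesis Hd : 0 <= delta.
Hypothesis HRIP : rip_bounds N B blk w m A (2 * s) delta.

Lemma rip_dot_le u v : w0norm N B blk w u <= s -> w0norm N B blk w v <= s ->
  (forall j, (j < N)%nat -> u j * v j = 0) ->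
  dot m (matvec N A u) (matvec N A v) <= delta * norm2 N u * norm2 N v.
Proof.
  intros Hu Hv Huv. apply le_mul_of_amgm; try apply norm2_nonneg; auto. intros T HT.
  (* polarization with p = T u + v and q = T u - v, which have the same norm *)
  set (p := vadd (vscale T u) v). set (q := vadd (vscale T u) (vscale (-1) v)).
  assert (Hp : w0norm N B blk w p <= 2 * s).
  { eapply Rle_trans; [apply w0norm_add_le|]. assert (H := w0norm_scal_le N B blk w T u). lra. }
  assert (Hq : w0norm N B blk w q <= 2 * s).
  { eapply Rle_trans; [apply w0norm_add_le|].
    assert (H1 := w0norm_scal_le N B blk w T u). assert (H2 := w0norm_scal_le N B blk w (-1) v). lra. }
  assert (Ep := norm2_sq_disjoint_add N T u v Huv).
  assert (Eq : norm2 N q ^ 2 = T ^ 2 * norm2 N u ^ 2 + norm2 N v ^ 2).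
  { unfold q. rewrite norm2_sq_disjoint_add, norm2_opp; [reflexivity|].
    intros j Hj. unfold vscale. specialize (Huv j Hj). nra. }
  destruct (HRIP p Hp) as [_ Hup]. destruct (HRIP q Hq) as [Hlo _].
  assert (Epol : norm2 m (matvec N A p) ^ 2 - norm2 m (matvec N A q) ^ 2
                 = 4 * T * dot m (matvec N A u) (matvec N A v)).
  { unfold p, q. rewrite !matvec_add, !matvec_scal, !norm2_sq.
    unfold dot, vadd, vscale. unfold Rminus. rewrite <- fsum_opp, <- fsum_add, <- fsum_scal.
    apply fsum_ext. intros. ring. }
  fold p in Ep. rewrite Ep in Hup. rewrite Eq in Hlo.
  apply Rmult_le_reg_l with (4 * T); [lra|].
  replace (4 * T * (delta * (T * norm2 N u ^ 2 + norm2 N v ^ 2 / T) / 2))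
    with (2 * delta * (T ^ 2 * norm2 N u ^ 2 + norm2 N v ^ 2)) by (field; lra).
  lra.
Qed.

Lemma rip_dot_abs_le u v : w0norm N B blk w u <= s -> w0norm N B blk w v <= s ->
  (forall j, (j < N)%nat -> u j * v j = 0) ->
  Rabs (dot m (matvec N A u) (matvec N A v)) <= delta * norm2 N u * norm2 N v.
Proof.
  intros Hu Hv Huv. apply Rabs_le. split; [|now apply rip_dot_le].
  assert (H := rip_dot_le u (vscale (-1) v) Hu).
  rewrite matvec_scal, dot_scal_r, norm2_opp in H.
  enough (-1 * dot m (matvec N A u) (matvec N A v) <= delta * norm2 N u * norm2 N v) by lra.
  apply H.
  - eapply Rle_trans; [apply w0norm_scal_le | exact Hv].
  - intros j Hj. unfold vscale. specialize (Huv j Hj). nra.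
Qed.

Lemma rip_split_lower_bound q0 q1 r X :
  w0norm N B blk w q0 <= s -> w0norm N B blk w q1 <= s ->
  (forall j, (j < N)%nat -> q0 j * q1 j = 0) -> 0 <= X ->
  Rabs (dot m (matvec N A q0) (matvec N A r)) <= delta * norm2 N q0 * X ->
  Rabs (dot m (matvec N A q1) (matvec N A r)) <= delta * norm2 N q1 * X ->
  (1 - delta) * norm2 N (vadd q0 q1)
  <= sqrt (1 + delta) * norm2 m (matvec N A (vadd (vadd q0 q1) r)) + sqrt 2 * delta * X.
Proof.
  intros H0 H1 Hdisj HX Hr0 Hr1.
  set (q := vadd q0 q1).
  assert (Hq : w0norm N B blk w q <= 2 * s) by (eapply Rle_trans; [apply w0norm_add_le | lra]).
  assert (Eq : norm2 N q ^ 2 = norm2 N q0 ^ 2 + norm2 N q1 ^ 2) by now apply norm2_sq_disjoint_sum.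
  assert (Hn0 := norm2_nonneg N q0). assert (Hn1 := norm2_nonneg N q1).
  assert (Hn := norm2_nonneg N q). assert (HAr := norm2_nonneg m (matvec N A (vadd q r))).
  assert (Hsum : norm2 N q0 + norm2 N q1 <= sqrt 2 * norm2 N q).
  { apply pow2_le_cancel; [apply Rmult_le_pos; [apply sqrt_pos | lra]|].
    rewrite Rpow_mult_distr, pow2_sqrt, Eq by lra.
    assert (H := pow2_ge_0 (norm2 N q0 - norm2 N q1)). nra. }
  assert (HAq : norm2 m (matvec N A q) <= sqrt (1 + delta) * norm2 N q).
  { destruct (HRIP q Hq) as [_ Hup]. apply pow2_le_cancel.
    - apply Rmult_le_pos; [apply sqrt_pos | lra].
    - rewrite Rpow_mult_distr, pow2_sqrt by lra. exact Hup. }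
  assert (Hlow : (1 - delta) * norm2 N q ^ 2 <= norm2 m (matvec N A q) ^ 2) by apply HRIP, Hq.
  assert (Edec : norm2 m (matvec N A q) ^ 2 = dot m (matvec N A q) (matvec N A (vadd q r))
            - dot m (matvec N A q0) (matvec N A r) - dot m (matvec N A q1) (matvec N A r)).
  { assert (dot m (matvec N A q) (matvec N A r)
            = dot m (matvec N A q0) (matvec N A r) + dot m (matvec N A q1) (matvec N A r)).
    { unfold q. rewrite matvec_add, dot_sym, dot_add_r, !(dot_sym m (matvec N A r)). reflexivity. }
    rewrite norm2_sq, matvec_add, dot_add_r. lra. }
  assert (Hcs := cauchy_schwarz m (matvec N A q) (matvec N A (vadd q r))).
  assert (T1 : dot m (matvec N A q) (matvec N A (vadd q r))
               <= sqrt (1 + delta) * norm2 N q * norm2 m (matvec N A (vadd q r))).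
  { eapply Rle_trans; [exact Hcs|]. apply Rmult_le_compat_r; assumption. }
  assert (T2 : - dot m (matvec N A q0) (matvec N A r) - dot m (matvec N A q1) (matvec N A r)
               <= delta * (sqrt 2 * norm2 N q) * X).
  { assert (R0 := Rle_abs (- dot m (matvec N A q0) (matvec N A r))).
    assert (R1 := Rle_abs (- dot m (matvec N A q1) (matvec N A r))).
    rewrite Rabs_Ropp in R0, R1.
    assert (delta * (norm2 N q0 + norm2 N q1) * X <= delta * (sqrt 2 * norm2 N q) * X).
    { apply Rmult_le_compat_r; [exact HX | apply Rmult_le_compat_l; assumption]. }
    lra. }
  destruct (Req_dec (norm2 N q) 0) as [Z|NZ].
  - rewrite Z. assert (0 <= sqrt (1 + delta)) by apply sqrt_pos.
    assert (0 <= sqrt 2 * delta * X) by (apply Rmult_le_pos; [apply Rmult_le_pos; [apply sqrt_pos|]|]; lra).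
    nra.
  - apply Rmult_le_reg_l with (norm2 N q); [lra|]. nra.
Qed.

End RIP.

Definition inb (L : list nat) (b : nat) : bool := existsb (Nat.eqb b) L.

Lemma inb_In L b : inb L b = true <-> In b L.
Proof.
  unfold inb. rewrite existsb_exists. split.
  - intros [x [Hx E]]. apply Nat.eqb_eq in E. now subst.
  - intros H. exists b. split; [exact H | apply Nat.eqb_refl].
Qed.

Lemma inb_app L1 L2 b : inb (L1 ++ L2) b = orb (inb L1 b) (inb L2 b).
Proof. apply existsb_app. Qed.

Lemma inb_app_disjoint L1 L2 b : NoDup (L1 ++ L2) -> andb (inb L1 b) (inb L2 b) = false.
Proof.
  intros H. destruct (inb L1 b) eqn:E1; [simpl|reflexivity].
  destruct (inb L2 b) eqn:E2; [exfalso|reflexivity].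
  apply inb_In in E1, E2. destruct (in_split _ _ E2) as [l [l' ->]].
  rewrite app_assoc in H. apply NoDup_remove_2 in H. apply H.
  rewrite <- app_assoc. apply in_or_app. now left.
Qed.

Definition lsum (L : list nat) (g : nat -> R) : R := fold_right (fun b acc => g b + acc) 0 L.

Lemma fsum_inb n L g : NoDup L -> (forall b, In b L -> (b < n)%nat) ->
  fsum n (fun b => if inb L b then g b else 0) = lsum L g.
Proof.
  induction L as [|a L IH]; intros Hnd Hn; simpl; [apply fsum_zero|].
  inversion Hnd as [|? ? Ha HndL]; subst.
  rewrite (fsum_ext n _ (fun b => (if Nat.eq_dec a b then g b else 0) + (if inb L b then g b else 0))).
  - rewrite fsum_add, fsum_indicator, IH by (auto; intros; apply Hn; now right).
    destruct (Nat.ltb_spec a n); [reflexivity|]. specialize (Hn a (or_introl eq_refl)). lia.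
  - intros b _. unfold inb at 1. simpl. fold (inb L b). destruct (Nat.eq_dec a b) as [<-|Hab].
    + rewrite Nat.eqb_refl. simpl. destruct (inb L a) eqn:E; [|ring].
      apply inb_In in E. contradiction.
    + destruct (Nat.eqb_spec b a); [congruence | simpl; ring].
Qed.

Lemma StronglySorted_app_inv {A} (Rel : A -> A -> Prop) L1 L2 :
  StronglySorted Rel (L1 ++ L2) ->
  StronglySorted Rel L2 /\ (forall x y, In x L1 -> In y L2 -> Rel x y).
Proof.
  induction L1 as [|a L1 IH]; simpl; intros H; [split; [exact H | contradiction]|].
  apply StronglySorted_inv in H. destruct H as [H Ha]. destruct (IH H) as [H2 Hcross].
  split; [exact H2|]. intros x y [<-|Hx] Hy; [|now apply Hcross].
  rewrite Forall_forall in Ha. apply Ha, in_or_app. now right.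
Qed.

Fixpoint greedy (wt : nat -> R) (budget : R) (L : list nat) : list nat * list nat :=
  match L with
  | nil => (nil, nil)
  | b :: L' => if Rle_dec (wt b) budget then
                 let p := greedy wt (budget - wt b) L' in (b :: fst p, snd p)
               else (nil, L)
  end.

Lemma greedy_app wt budget L : fst (greedy wt budget L) ++ snd (greedy wt budget L) = L.
Proof.
  revert budget. induction L as [|a L IH]; intros budget; simpl; [reflexivity|].
  destruct (Rle_dec (wt a) budget); simpl; [now rewrite IH | reflexivity].
Qed.

Lemma greedy_lsum_le wt budget L : 0 <= budget -> lsum (fst (greedy wt budget L)) wt <= budget.
Proof.
  revert budget. induction L as [|a L IH]; intros budget Hb; simpl; [exact Hb|].
  destruct (Rle_dec (wt a) budget); simpl; [|exact Hb].
  assert (H := IH (budget - wt a) ltac:(lra)). lra.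
Qed.

Lemma greedy_lsum_gt wt budget L c R' : snd (greedy wt budget L) = c :: R' ->
  budget < lsum (fst (greedy wt budget L)) wt + wt c.
Proof.
  revert budget. induction L as [|a L IH]; intros budget H; simpl in *; [discriminate|].
  destruct (Rle_dec (wt a) budget); simpl in *.
  - assert (H1 := IH (budget - wt a) H). lra.
  - injection H as <- <-. simpl. lra.
Qed.

Lemma greedy_snd_length_lt wt budget L : L <> nil -> (forall b, In b L -> wt b <= budget) ->
  (length (snd (greedy wt budget L)) < length L)%nat.
Proof.
  intros Hn H. destruct L as [|a L]; [congruence|]. simpl.
  destruct (Rle_dec (wt a) budget) as [_|Ha]; [|exfalso; apply Ha, H; now left].
  simpl. rewrite <- (greedy_app wt (budget - wt a) L) at 2. rewrite length_app. lia.
Qed.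

Fixpoint insert_by (key : nat -> R) (a : nat) (L : list nat) : list nat :=
  match L with
  | nil => a :: nil
  | b :: L' => if Rle_dec (key b) (key a) then a :: b :: L' else b :: insert_by key a L'
  end.

Lemma insert_by_perm key a L : Permutation (a :: L) (insert_by key a L).
Proof.
  induction L as [|b L IH]; simpl; [reflexivity|].
  destruct (Rle_dec (key b) (key a)); [reflexivity|].
  eapply perm_trans; [apply perm_swap | now apply perm_skip].
Qed.

Lemma insert_by_sorted key a L : StronglySorted (fun x y => key y <= key x) L ->
  StronglySorted (fun x y => key y <= key x) (insert_by key a L).
Proof.
  induction L as [|b L IH]; simpl; intros H; [now repeat constructor|].
  apply StronglySorted_inv in H. destruct H as [HL Hb]. rewrite Forall_forall in Hb.
  destruct (Rle_dec (key b) (key a)).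
  - constructor; [now constructor; [|rewrite Forall_forall]|].
    rewrite Forall_forall. intros x [<-|Hx]; [lra|]. specialize (Hb x Hx). lra.
  - constructor; [now apply IH|]. rewrite Forall_forall. intros x Hx.
    apply (Permutation_in _ (Permutation_sym (insert_by_perm key a L))) in Hx.
    destruct Hx as [<-|Hx]; [lra | now apply Hb].
Qed.

Lemma sorted_permutation_exists (key : nat -> R) L :
  exists L', Permutation L L' /\ StronglySorted (fun x y => key y <= key x) L'.
Proof.
  induction L as [|a L [L' [Hp Hs]]]; [exists nil; split; constructor|].
  exists (insert_by key a L'). split.
  - eapply perm_trans; [apply perm_skip, Hp | apply insert_by_perm].
  - now apply insert_by_sorted.
Qed.

Lemma sqrt2_mul_chunk_le s delta a b : 0 < s -> 0 <= delta -> 0 <= a -> 0 <= b ->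
  sqrt 2 * delta * ((a + 2 * b) / sqrt (2 * s)) <= 2 * delta / sqrt s * (a + b).
Proof.
  intros Hs Hd Ha Hb. rewrite sqrt_mult_alt by lra.
  assert (0 < sqrt 2) by (apply sqrt_lt_R0; lra). assert (0 < sqrt s) by (apply sqrt_lt_R0; lra).
  replace (sqrt 2 * delta * ((a + 2 * b) / (sqrt 2 * sqrt s))) with (delta * (a + 2 * b) * / sqrt s)
    by (field; lra).
  replace (2 * delta / sqrt s * (a + b)) with (delta * (2 * a + 2 * b) * / sqrt s) by (field; lra).
  apply Rmult_le_compat_r; [left; now apply Rinv_0_lt_compat | nra].
Qed.

Section NullSpaceProperty.

Variables (N B : nat) (blk : nat -> nat) (w : nat -> R) (m : nat) (A : nat -> nat -> R).
Variables (s delta : R) (v : nat -> R).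
Hypothesis Hblk : forall j, (j < N)%nat -> (blk j < B)%nat.
Hypothesis Hw : forall b, (b < B)%nat -> 1 <= w b.
Hypothesis Hd : 0 <= delta.
Hypothesis Hd1 : delta < 1.
Hypothesis Hs : 0 < s.
Hypothesis Hws : forall b, (b < B)%nat -> w b ^ 2 <= s / 2.
Hypothesis HRIP : rip_bounds N B blk w m A (2 * s) delta.

Let wt (b : nat) : R := w b ^ 2.
Let ratio (b : nat) : R := blocknorm N blk v b / w b.
Let by_ratio (b c : nat) : Prop := ratio c <= ratio b.

Lemma restrict_inb_app G R u : NoDup (G ++ R) ->
  restrict blk (inb (G ++ R)) u = vadd (restrict blk (inb G) u) (restrict blk (inb R) u).
Proof.
  intros H. apply functional_extensionality. intros j. unfold restrict, vadd.
  rewrite inb_app. assert (Hd' := inb_app_disjoint G R (blk j) H).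
  destruct (inb G (blk j)), (inb R (blk j)); simpl in *; try discriminate; ring.
Qed.

Lemma w21_on_inb_app G R u : NoDup (G ++ R) ->
  w21_on N B blk w (inb (G ++ R)) u = w21_on N B blk w (inb G) u + w21_on N B blk w (inb R) u.
Proof.
  intros H. apply fsum_if_disjoint_union; intros b _; [apply inb_app | now apply inb_app_disjoint].
Qed.

Lemma sorted_block_list_exists (P : nat -> bool) : exists L, NoDup L /\
  (forall b, In b L <-> (b < B)%nat /\ P b = true) /\ StronglySorted by_ratio L.
Proof.
  destruct (sorted_permutation_exists ratio (filter P (seq 0 B))) as [L [Hp Hs']].
  exists L. split; [|split; [|exact Hs']].
  - eapply Permutation_NoDup; [exact Hp | apply NoDup_filter, seq_NoDup].
  - intros b. split; intros H.
    + apply (Permutation_in _ (Permutation_sym Hp)), filter_In in H.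
      destruct H as [H1 H2]. apply in_seq in H1. split; [lia | exact H2].
    + apply (Permutation_in _ Hp), filter_In. rewrite in_seq. destruct H. split; [lia | assumption].
Qed.

Lemma blocknorm_le_of_heavy G c : NoDup G -> (forall b, In b G -> (b < B)%nat) -> (c < B)%nat ->
  (forall b, In b G -> ratio c <= ratio b) -> s / 2 < block_weight B w (inb G) ->
  blocknorm N blk v c <= (2 * w21_on N B blk w (inb G) v / s) * w c.
Proof.
  intros Hnd HG Hc Hrat Hheavy.
  assert (Hwc := Hw c Hc). assert (Hvc := blocknorm_nonneg N blk v c).
  assert (Hr0 : 0 <= ratio c) by (apply Rmult_le_pos; [exact Hvc | left; apply Rinv_0_lt_compat; lra]).
  assert (H : ratio c * block_weight B w (inb G) <= w21_on N B blk w (inb G) v).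
  { apply bweight_mul_le_w21_on; [exact Hw|]. intros b Hb Hin. apply inb_In in Hin.
    assert (Hwb := Hw b Hb). specialize (Hrat b Hin). unfold ratio in Hrat |- *.
    replace (blocknorm N blk v b) with (blocknorm N blk v b / w b * w b) by (field; lra).
    apply Rmult_le_compat_r; lra. }
  assert (ratio c <= 2 * w21_on N B blk w (inb G) v / s).
  { apply Rmult_le_reg_r with (s / 2); [lra|].
    replace (2 * w21_on N B blk w (inb G) v / s * (s / 2)) with (w21_on N B blk w (inb G) v)
      by (field; lra). nra. }
  replace (blocknorm N blk v c) with (ratio c * w c) by (unfold ratio; field; lra).
  apply Rmult_le_compat_r; lra.
Qed.

Lemma greedy_split_spec L G R : NoDup L -> (forall b, In b L -> (b < B)%nat) ->
  StronglySorted by_ratio L -> greedy wt s L = (G, R) ->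
  G ++ R = L /\ block_weight B w (inb G) <= s /\ StronglySorted by_ratio R /\
  (forall c, In c R -> blocknorm N blk v c <= (2 * w21_on N B blk w (inb G) v / s) * w c).
Proof.
  intros Hnd HB Hsort Hgr.
  assert (Happ : G ++ R = L) by (rewrite <- (greedy_app wt s L), Hgr; reflexivity).
  rewrite <- Happ in Hnd, HB, Hsort.
  assert (HndG : NoDup G) by (eapply NoDup_app_remove_r; exact Hnd).
  assert (HBG : forall b, In b G -> (b < B)%nat) by (intros b Hb; apply HB, in_or_app; now left).
  assert (HWG : block_weight B w (inb G) = lsum G wt) by now apply fsum_inb.
  destruct (StronglySorted_app_inv _ _ _ Hsort) as [HsortR Hcross].
  split; [exact Happ|]. split.
  { rewrite HWG. replace G with (fst (greedy wt s L)) by now rewrite Hgr.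
    apply greedy_lsum_le. lra. }
  split; [exact HsortR|].
  intros c Hc. destruct R as [|c1 R1]; [contradiction|].
  assert (Hgt := greedy_lsum_gt wt s L c1 R1). rewrite Hgr in Hgt. specialize (Hgt eq_refl).
  assert (Hc1 : (c1 < B)%nat) by (apply HB, in_or_app; right; now left).
  assert (wt c1 <= s / 2) by now apply Hws.
  apply blocknorm_le_of_heavy.
  - exact HndG.
  - exact HBG.
  - apply HB, in_or_app. now right.
  - intros b Hb. now apply Hcross.
  - cbn [fst] in Hgt. rewrite HWG. lra.
Qed.

Lemma norm2_restrict_le_of_ratio P a : 0 <= a ->
  (forall b, (b < B)%nat -> P b = true -> blocknorm N blk v b <= (2 * a / s) * w b) ->
  norm2 N (restrict blk P v) <= (a + w21_on N B blk w P v) / sqrt (2 * s).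
Proof.
  intros Ha H. assert (HL := w21_on_nonneg N B blk w Hw P v).
  assert (Hs2 : 0 < sqrt (2 * s)) by (apply sqrt_lt_R0; lra).
  apply pow2_le_cancel; [apply Rmult_le_pos; [lra | left; apply Rinv_0_lt_compat, Hs2]|].
  eapply Rle_trans; [apply (norm2_restrict_sq_le N B blk w Hblk Hw _ _ _ H)|].
  (* AM-GM: 4 a L <= (a + L)^2 *)
  replace (((a + w21_on N B blk w P v) / sqrt (2 * s)) ^ 2)
    with ((a + w21_on N B blk w P v) ^ 2 / (2 * s))
    by (unfold Rdiv; rewrite Rpow_mult_distr, pow_inv, pow2_sqrt by lra; reflexivity).
  apply Rmult_le_reg_r with (2 * s); [lra|].
  replace (2 * a / s * w21_on N B blk w P v * (2 * s)) with (4 * a * w21_on N B blk w P v)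
    by (field; lra).
  replace ((a + w21_on N B blk w P v) ^ 2 / (2 * s) * (2 * s))
    with ((a + w21_on N B blk w P v) ^ 2) by (field; lra).
  assert (H0 := pow2_ge_0 (a - w21_on N B blk w P v)). nra.
Qed.


(* The blocks of Rl are cut greedily into chunks of weight at most s; each chunk
   interacts with q through the RIP, and its size is controlled by the previous one. *)
Lemma rip_dot_sorted_tail_le Rl : NoDup Rl -> (forall b, In b Rl -> (b < B)%nat) ->
  StronglySorted by_ratio Rl -> forall q a, 0 <= a -> w0norm N B blk w q <= s ->
  (forall j, (j < N)%nat -> inb Rl (blk j) = true -> q j = 0) ->
  (forall c, In c Rl -> blocknorm N blk v c <= (2 * a / s) * w c) ->
  Rabs (dot m (matvec N A q) (matvec N A (restrict blk (inb Rl) v)))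
  <= delta * norm2 N q * ((a + 2 * w21_on N B blk w (inb Rl) v) / sqrt (2 * s)).
Proof.
  induction Rl as [Rl IH] using (induction_ltof1 _ (@length nat)). unfold ltof in IH.
  intros Hnd HB Hsort q a Ha Hq Hqz Hrat.
  assert (Hs2 : 0 < sqrt (2 * s)) by (apply sqrt_lt_R0; lra).
  assert (HqN := norm2_nonneg N q).
  destruct Rl as [|c0 Rl0].
  { change (restrict blk (inb nil) v) with (fun _ : nat => 0).
    rewrite matvec_zero, dot_zero_r, Rabs_R0.
    assert (H := w21_on_nonneg N B blk w Hw (inb nil) v).
    apply Rmult_le_pos; [nra | apply Rmult_le_pos; [lra | left; apply Rinv_0_lt_compat, Hs2]]. }
  set (Rl := c0 :: Rl0) in *.
  destruct (greedy wt s Rl) as [G R'] eqn:Hgr.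
  assert (Hlen : (length R' < length Rl)%nat).
  { replace R' with (snd (greedy wt s Rl)) by now rewrite Hgr.
    apply greedy_snd_length_lt; [unfold Rl; discriminate|].
    intros b Hb. assert (wt b <= s / 2) by now apply Hws, HB. lra. }
  destruct (greedy_split_spec Rl G R' Hnd HB Hsort Hgr) as (Happ & HWG & HsortR & HratR).
  assert (HndGR : NoDup (G ++ R')) by now rewrite Happ.
  assert (HqG : forall j, (j < N)%nat -> inb G (blk j) = true -> q j = 0).
  { intros j Hj HG. apply Hqz; [exact Hj|]. rewrite <- Happ, inb_app, HG. reflexivity. }
  set (aG := w21_on N B blk w (inb G) v). set (aR := w21_on N B blk w (inb R') v).
  assert (HaG : 0 <= aG) by apply (w21_on_nonneg N B blk w Hw).
  assert (Hchunk : Rabs (dot m (matvec N A q) (matvec N A (restrict blk (inb G) v)))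
                   <= delta * norm2 N q * ((a + aG) / sqrt (2 * s))).
  { eapply Rle_trans; [apply (rip_dot_abs_le N B blk w m A s delta Hd HRIP)|].
    - exact Hq.
    - eapply Rle_trans; [apply w0norm_restrict_le | exact HWG].
    - intros j Hj. unfold restrict. destruct (inb G (blk j)) eqn:E; [rewrite HqG; auto|]; ring.
    - apply Rmult_le_compat_l; [apply Rmult_le_pos; assumption|].
      apply norm2_restrict_le_of_ratio; [exact Ha|].
      intros b _ Hin. apply Hrat. rewrite <- Happ. apply in_or_app. left. now apply inb_In. }
  assert (Htail : Rabs (dot m (matvec N A q) (matvec N A (restrict blk (inb R') v)))
                  <= delta * norm2 N q * ((aG + 2 * aR) / sqrt (2 * s))).
  { apply IH; auto.
    - eapply NoDup_app_remove_l. exact HndGR.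
    - intros b Hb. apply HB. rewrite <- Happ. apply in_or_app. now right.
    - intros j Hj HR. apply Hqz; [exact Hj|]. rewrite <- Happ, inb_app, HR. apply Bool.orb_true_r. }
  rewrite <- Happ, restrict_inb_app, w21_on_inb_app, matvec_add, dot_add_r by exact HndGR.
  fold aG aR. eapply Rle_trans; [apply Rabs_triang|].
  replace (delta * norm2 N q * ((a + 2 * (aG + aR)) / sqrt (2 * s)))
    with (delta * norm2 N q * ((a + aG) / sqrt (2 * s))
          + delta * norm2 N q * ((aG + 2 * aR) / sqrt (2 * s))) by (field; lra).
  now apply Rplus_le_compat.
Qed.

Lemma complement_chunk_split (S : nat -> bool) : exists G R,
  NoDup (G ++ R) /\ (forall b, In b (G ++ R) -> (b < B)%nat /\ S b = false) /\
  (forall b, (b < B)%nat -> negb (S b) = orb (inb G b) (inb R b)) /\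
  block_weight B w (inb G) <= s /\ StronglySorted by_ratio R /\
  (forall c, In c R -> blocknorm N blk v c <= (2 * w21_on N B blk w (inb G) v / s) * w c).
Proof.
  destruct (sorted_block_list_exists (fun b => negb (S b))) as [L [HndL [HinL Hsort]]].
  destruct (greedy wt s L) as [G R] eqn:Hgr.
  destruct (greedy_split_spec L G R HndL ltac:(intros b Hb; now apply HinL) Hsort Hgr)
    as (Happ & HWG & HsortR & HratR).
  rewrite <- Happ in HndL, HinL.
  assert (HGR : forall b, In b (G ++ R) -> (b < B)%nat /\ S b = false).
  { intros b Hb. apply HinL in Hb. destruct Hb as [Hb HSb]. split; [exact Hb | now destruct (S b)]. }
  exists G, R. split; [exact HndL|]. split; [exact HGR|]. split; [|auto].
  intros b Hb. rewrite <- inb_app. destruct (S b) eqn:ES; simpl.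
  - destruct (inb (G ++ R) b) eqn:E; [|reflexivity].
    apply inb_In, HGR in E. destruct E; congruence.
  - symmetry. apply inb_In, HinL. now rewrite ES.
Qed.

Lemma matvec_restrict_complement_sum S G R u : NoDup (G ++ R) ->
  (forall b, (b < B)%nat -> negb (S b) = orb (inb G b) (inb R b)) ->
  matvec N A (vadd (vadd (restrict blk S u) (restrict blk (inb G) u)) (restrict blk (inb R) u))
  = matvec N A u.
Proof.
  intros Hnd Hcompl. apply matvec_ext. intros j Hj. specialize (Hcompl (blk j) (Hblk j Hj)).
  assert (Hd' := inb_app_disjoint G R (blk j) Hnd). unfold restrict, vadd.
  destruct (S (blk j)), (inb G (blk j)), (inb R (blk j)); simpl in *; try discriminate; ring.
Qed.

Lemma robust_null_space_property (S : nat -> bool) : block_weight B w S <= s ->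
  (1 - delta) * norm2 N (restrict blk S v)
  <= 2 * delta / sqrt s * w21_on N B blk w (fun b => negb (S b)) v
     + sqrt (1 + delta) * norm2 m (matvec N A v).
Proof.
  intros HS.
  destruct (complement_chunk_split S) as (G & R & HndGR & HGR & Hcompl & HWG & HsortR & HratR).
  set (v0 := restrict blk S v). set (v1 := restrict blk (inb G) v).
  set (vR := restrict blk (inb R) v).
  set (aG := w21_on N B blk w (inb G) v). set (aR := w21_on N B blk w (inb R) v).
  set (X := (aG + 2 * aR) / sqrt (2 * s)).
  assert (HaG : 0 <= aG) by apply (w21_on_nonneg N B blk w Hw).
  assert (HaR : 0 <= aR) by apply (w21_on_nonneg N B blk w Hw).
  assert (HX : 0 <= X) by (apply Rmult_le_pos; [lra | left; apply Rinv_0_lt_compat, sqrt_lt_R0; lra]).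
  assert (Hw0 : w0norm N B blk w v0 <= s) by (eapply Rle_trans; [apply w0norm_restrict_le | exact HS]).
  assert (Hw1 : w0norm N B blk w v1 <= s) by (eapply Rle_trans; [apply w0norm_restrict_le | exact HWG]).
  assert (HvR : forall u, w0norm N B blk w u <= s ->
            (forall j, (j < N)%nat -> inb R (blk j) = true -> u j = 0) ->
            Rabs (dot m (matvec N A u) (matvec N A vR)) <= delta * norm2 N u * X).
  { intros u Hu Hzero. apply rip_dot_sorted_tail_le; auto.
    - eapply NoDup_app_remove_l. exact HndGR.
    - intros b Hb. apply HGR, in_or_app. now right. }
  assert (HvR0 : Rabs (dot m (matvec N A v0) (matvec N A vR)) <= delta * norm2 N v0 * X).
  { apply HvR; [exact Hw0|]. intros j _ Hj. unfold v0, restrict.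
    apply inb_In in Hj. now destruct (HGR (blk j) ltac:(apply in_or_app; now right)) as [_ ->]. }
  assert (HvR1 : Rabs (dot m (matvec N A v1) (matvec N A vR)) <= delta * norm2 N v1 * X).
  { apply HvR; [exact Hw1|]. intros j _ Hj. unfold v1, restrict.
    assert (H := inb_app_disjoint G R (blk j) HndGR). rewrite Hj in H.
    destruct (inb G (blk j)); [discriminate | reflexivity]. }
  assert (Hdisj01 : forall j, (j < N)%nat -> v0 j * v1 j = 0).
  { intros j _. unfold v0, v1, restrict. destruct (inb G (blk j)) eqn:E1; [|ring].
    apply inb_In in E1. destruct (HGR (blk j) ltac:(apply in_or_app; now left)) as [_ ->]. ring. }
  assert (Hsplit := rip_split_lower_bound N B blk w m A s delta Hd HRIP v0 v1 vR X
                      Hw0 Hw1 Hdisj01 HX HvR0 HvR1).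
  assert (Hv := matvec_restrict_complement_sum S G R v HndGR Hcompl). fold v0 v1 vR in Hv.
  assert (Hv0 := norm2_le_disjoint_sum N v0 v1 Hdisj01).
  assert (HL : w21_on N B blk w (fun b => negb (S b)) v = aG + aR)
    by (apply fsum_if_disjoint_union; [exact Hcompl | intros; now apply inb_app_disjoint]).
  assert (HXL := sqrt2_mul_chunk_le s delta aG aR Hs Hd HaG HaR). fold X in HXL.
  rewrite Hv in Hsplit. rewrite HL.
  assert ((1 - delta) * norm2 N v0 <= (1 - delta) * norm2 N (vadd v0 v1))
    by (apply Rmult_le_compat_l; lra).
  lra.
Qed.

Lemma norm2_le_w21norm_rip :
  (1 - delta) * norm2 N v
  <= 2 * delta / sqrt s * w21norm N B blk w v + sqrt (1 + delta) * norm2 m (matvec N A v)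
     + (1 - delta) * (w21norm N B blk w v / sqrt (2 * s)).
Proof.
  destruct (complement_chunk_split (fun _ => false)) as (G & R & HndL & _ & Hall & HWG & _ & HratR).
  set (aG := w21_on N B blk w (inb G) v). set (aR := w21_on N B blk w (inb R) v).
  assert (HW : w21norm N B blk w v = aG + aR).
  { change (w21norm N B blk w v) with (w21_on N B blk w (fun _ => true) v).
    apply fsum_if_disjoint_union; [exact Hall | intros; now apply inb_app_disjoint]. }
  assert (HaG : 0 <= aG) by apply (w21_on_nonneg N B blk w Hw).
  assert (Hnsp := robust_null_space_property (inb G) HWG).
  assert (HvR : norm2 N (restrict blk (inb R) v) <= w21norm N B blk w v / sqrt (2 * s)).
  { rewrite HW. apply norm2_restrict_le_of_ratio; [exact HaG|].
    intros c _ Hc. apply HratR, inb_In, Hc. }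
  assert (Hv : norm2 N v <= norm2 N (restrict blk (inb G) v) + norm2 N (restrict blk (inb R) v)).
  { eapply Rle_trans; [|apply norm2_add_le]. rewrite <- restrict_inb_app by exact HndL.
    right. apply norm2_ext. intros j Hj. unfold restrict.
    now rewrite inb_app, <- (Hall (blk j) (Hblk j Hj)). }
  assert (HL := w21_on_le_w21norm N B blk w Hw (fun b => negb (inb G b)) v).
  assert (Hc : 0 <= 2 * delta / sqrt s)
    by (apply Rmult_le_pos; [lra | left; apply Rinv_0_lt_compat, sqrt_lt_R0, Hs]).
  assert (2 * delta / sqrt s * w21_on N B blk w (fun b => negb (inb G b)) v
          <= 2 * delta / sqrt s * w21norm N B blk w v) by (apply Rmult_le_compat_l; assumption).
  assert ((1 - delta) * norm2 N (restrict blk (inb R) v)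
          <= (1 - delta) * (w21norm N B blk w v / sqrt (2 * s))) by (apply Rmult_le_compat_l; lra).
  assert ((1 - delta) * norm2 N v
          <= (1 - delta) * (norm2 N (restrict blk (inb G) v) + norm2 N (restrict blk (inb R) v)))
    by (apply Rmult_le_compat_l; lra).
  lra.
Qed.
End NullSpaceProperty.

Definition block_support (N : nat) (blk : nat -> nat) (z : nat -> R) (b : nat) : bool :=
  if excluded_middle_informative (block_nonzero N blk z b) then true else false.

Lemma block_weight_support N B blk w z :
  block_weight B w (block_support N blk z) = w0norm N B blk w z.
Proof.
  unfold block_weight, w0norm, wsetweight, block_support. apply fsum_ext. intros b _.
  now destruct (excluded_middle_informative (block_nonzero N blk z b)).
Qed.

Lemma w21_on_off_support_le N B blk w x z : (forall b, (b < B)%nat -> 1 <= w b) ->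
  w21_on N B blk w (fun b => negb (block_support N blk z b)) x <= w21norm N B blk w (vsub x z).
Proof.
  intros Hw. eapply Rle_trans; [|apply (w21_on_le_w21norm N B blk w Hw (fun b => negb (block_support N blk z b)))].
  right. apply fsum_ext. intros b _. unfold block_support.
  destruct (excluded_middle_informative (block_nonzero N blk z b)) as [|Hz]; [reflexivity|].
  simpl. f_equal. apply blocknorm_ext. intros j Hj <-. unfold vsub.
  destruct (Req_dec (z j) 0) as [->|Hzj]; [ring | exfalso; apply Hz; now exists j].
Qed.

Lemma w21_on_cone N B blk w (S : nat -> bool) x xhat : (forall b, (b < B)%nat -> 1 <= w b) ->
  w21norm N B blk w xhat <= w21norm N B blk w x ->
  w21_on N B blk w (fun b => negb (S b)) (vsub x xhat)
  <= w21_on N B blk w S (vsub x xhat) + 2 * w21_on N B blk w (fun b => negb (S b)) x.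
Proof.
  intros Hw Hx. rewrite (w21norm_split N B blk w S x), (w21norm_split N B blk w S xhat) in Hx.
  assert (HS : w21_on N B blk w S x <= w21_on N B blk w S xhat + w21_on N B blk w S (vsub x xhat)).
  { apply w21_on_triangle; [exact Hw|]. intros b _.
    rewrite (blocknorm_ext N blk x (vadd xhat (vsub x xhat)))
      by (intros; unfold vadd, vsub; ring).
    apply blocknorm_add_le. }
  assert (HSc : w21_on N B blk w (fun b => negb (S b)) (vsub x xhat)
                <= w21_on N B blk w (fun b => negb (S b)) x + w21_on N B blk w (fun b => negb (S b)) xhat).
  { apply w21_on_triangle; [exact Hw|]. intros b _. apply blocknorm_sub_le. }
  lra.
Qed.

Section Recovery.

Variables (m N B : nat) (A : nat -> nat -> R) (blk : nat -> nat) (w : nat -> R) (s delta : R).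
Variables (x e xhat : nat -> R) (eta : R).
Hypothesis Hblk : forall j, (j < N)%nat -> (blk j < B)%nat.
Hypothesis Hw : forall b, (b < B)%nat -> 1 <= w b.
Hypothesis Hd : 0 <= delta.
Hypothesis Hd3 : delta < 1 / 3.
Hypothesis Hs : 0 < s.
Hypothesis Hws : forall b, (b < B)%nat -> w b ^ 2 <= s / 2.
Hypothesis HRIP : rip_bounds N B blk w m A (2 * s) delta.
Hypothesis He : norm2 m e <= eta.
Hypothesis Hfeas : norm2 m (vsub (matvec N A xhat) (vadd (matvec N A x) e)) <= eta.
Hypothesis Hmin : forall z, norm2 m (vsub (matvec N A z) (vadd (matvec N A x) e)) <= eta ->
  w21norm N B blk w xhat <= w21norm N B blk w z.

Lemma norm2_matvec_error_le : norm2 m (matvec N A (vsub x xhat)) <= 2 * eta.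
Proof.
  rewrite matvec_sub.
  replace (vsub (matvec N A x) (matvec N A xhat))
    with (vsub (vscale (-1) (vsub (matvec N A xhat) (vadd (matvec N A x) e))) e)
    by (apply functional_extensionality; intros; unfold vsub, vscale, vadd; ring).
  eapply Rle_trans; [apply norm2_sub_le|]. rewrite norm2_opp. lra.
Qed.

Lemma w21norm_minimizer_le : w21norm N B blk w xhat <= w21norm N B blk w x.
Proof.
  apply Hmin.
  replace (vsub (matvec N A x) (vadd (matvec N A x) e)) with (vscale (-1) e)
    by (apply functional_extensionality; intros; unfold vsub, vscale, vadd; ring).
  now rewrite norm2_opp.
Qed.

Lemma w21_error_estimate z : w0norm N B blk w z <= s ->
  (1 - 3 * delta) * w21norm N B blk w (vsub x xhat)
  <= 2 * (1 + delta) * w21norm N B blk w (vsub x z) + 4 * sqrt (1 + delta) * (sqrt s * eta).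
Proof.
  intros Hz. set (v := vsub x xhat). set (S := block_support N blk z).
  assert (HWS : block_weight B w S <= s) by (unfold S; now rewrite block_weight_support).
  assert (Hnsp := robust_null_space_property N B blk w m A s delta v Hblk Hw Hd ltac:(lra) Hs Hws HRIP S HWS).
  assert (HCS := w21_on_cauchy_schwarz N B blk w Hblk S v).
  assert (Hcone := w21_on_cone N B blk w S x xhat Hw w21norm_minimizer_le).
  assert (Hoff := w21_on_off_support_le N B blk w x z Hw).
  assert (HAv := norm2_matvec_error_le).
  fold v in Hcone, HAv. fold S in Hoff. rewrite (w21norm_split N B blk w S v).
  set (a := w21_on N B blk w S v) in *. set (b := w21_on N B blk w (fun b => negb (S b)) v) in *.
  set (e0 := w21_on N B blk w (fun b => negb (S b)) x) in *.
  set (n := norm2 N (restrict blk S v)) in *.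
  assert (Hs1 : 0 < sqrt s) by (apply sqrt_lt_R0, Hs).
  assert (Hsq : 0 <= sqrt (1 + delta)) by apply sqrt_pos.
  assert (Ha : a <= sqrt s * n).
  { eapply Rle_trans; [exact HCS|]. apply Rmult_le_compat_r; [apply norm2_nonneg|].
    now apply sqrt_le_1_alt. }
  assert (Hb : 0 <= b) by apply (w21_on_nonneg N B blk w Hw).
  assert (Ha0 : 0 <= a) by apply (w21_on_nonneg N B blk w Hw).
  assert (Hn : (1 - delta) * a <= 2 * delta * b + 2 * sqrt (1 + delta) * (sqrt s * eta)).
  { assert (sqrt (1 + delta) * norm2 m (matvec N A v) <= sqrt (1 + delta) * (2 * eta))
      by (apply Rmult_le_compat_l; assumption).
    assert ((1 - delta) * a <= sqrt s * ((1 - delta) * n))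
      by (replace (sqrt s * ((1 - delta) * n)) with ((1 - delta) * (sqrt s * n)) by ring;
          apply Rmult_le_compat_l; lra).
    assert (sqrt s * ((1 - delta) * n) <= sqrt s * (2 * delta / sqrt s * b + sqrt (1 + delta) * (2 * eta)))
      by (apply Rmult_le_compat_l; lra).
    replace (2 * delta * b + 2 * sqrt (1 + delta) * (sqrt s * eta))
      with (sqrt s * (2 * delta / sqrt s * b + sqrt (1 + delta) * (2 * eta))) by (field; lra).
    lra. }
  assert (P1 : 0 <= (1 - 3 * delta) * (2 * e0 + a - b)) by (apply Rmult_le_pos; lra).
  assert (P2 : 0 <= delta * (2 * e0 + a - b)) by (apply Rmult_le_pos; lra).
  assert (P3 : (1 + delta) * e0 <= (1 + delta) * w21norm N B blk w (vsub x z))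
    by (apply Rmult_le_compat_l; lra).
  nra.
Qed.

Lemma l2_error_estimate :
  (1 - delta) * (sqrt s * norm2 N (vsub x xhat))
  <= (2 * delta + (1 - delta) * (sqrt 2 / 2)) * w21norm N B blk w (vsub x xhat)
     + 2 * sqrt (1 + delta) * (sqrt s * eta).
Proof.
  assert (Hl2 := norm2_le_w21norm_rip N B blk w m A s delta (vsub x xhat) Hblk Hw Hd ltac:(lra) Hs Hws HRIP).
  assert (HAv := norm2_matvec_error_le).
  assert (Hs1 : 0 < sqrt s) by (apply sqrt_lt_R0, Hs).
  assert (Hs2 : 0 < sqrt 2) by (apply sqrt_lt_R0; lra).
  assert (sqrt (1 + delta) * norm2 m (matvec N A (vsub x xhat)) <= sqrt (1 + delta) * (2 * eta))
    by (apply Rmult_le_compat_l; [apply sqrt_pos | exact HAv]).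
  apply Rmult_le_compat_l with (r := sqrt s) in Hl2; [|lra].
  replace (sqrt s * (2 * delta / sqrt s * w21norm N B blk w (vsub x xhat)
             + sqrt (1 + delta) * norm2 m (matvec N A (vsub x xhat))
             + (1 - delta) * (w21norm N B blk w (vsub x xhat) / sqrt (2 * s))))
    with ((2 * delta + (1 - delta) * (sqrt 2 / 2)) * w21norm N B blk w (vsub x xhat)
          + sqrt s * (sqrt (1 + delta) * norm2 m (matvec N A (vsub x xhat)))) in Hl2.
  2: { assert (Hinv : sqrt 2 / 2 = / sqrt 2).
       { assert (sqrt 2 * sqrt 2 = 2) by (apply sqrt_sqrt; lra).
         apply Rmult_eq_reg_l with (sqrt 2); [|lra]. rewrite Rinv_r by lra. lra. }
       rewrite Hinv, sqrt_mult_alt by lra. field. lra. }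
  assert (sqrt s * (sqrt (1 + delta) * norm2 m (matvec N A (vsub x xhat)))
          <= sqrt s * (sqrt (1 + delta) * (2 * eta))) by (apply Rmult_le_compat_l; lra).
  lra.
Qed.

End Recovery.

Definition c_delta (d : R) : R :=
  2 * (1 + d * (2 * sqrt 2 - 3)) ^ 2 / ((1 - d) * (1 - d * (2 * sqrt 2 + 1))).

Definition d_delta (d : R) : R :=
  2 * (3 + d * (2 * sqrt 2 - 3)) * sqrt (1 + d) / ((1 - d) * (1 - d * (2 * sqrt 2 + 1))).

Lemma sqrt2_bounds : 1.414 < sqrt 2 < 1.415.
Proof.
  assert (H := sqrt_sqrt 2 ltac:(lra)). assert (H0 := sqrt_pos 2). split; nra.
Qed.

Section Constants.

Variable d : R.
Hypothesis Hd : 0 <= d.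
Hypothesis Hdb : d * (2 * sqrt 2 + 1) < 1.

Lemma delta_lt_0_2613 : d < 0.2613.
Proof. assert (H := sqrt2_bounds). nra. Qed.

(* Products of the sign conditions on sqrt 2 - 1.414, 1.415 - sqrt 2, d and
   0.2613 - d, from which nra certifies the polynomial inequalities below. *)
Ltac sqrt2_delta_nra :=
  let r := constr:(sqrt 2) in
  assert (Hr := sqrt_sqrt 2 ltac:(lra)); assert (Hb := sqrt2_bounds);
  assert (Hd2 := delta_lt_0_2613);
  assert (0 <= (r - 1.414) * d) by (apply Rmult_le_pos; lra);
  assert (0 <= (1.415 - r) * d) by (apply Rmult_le_pos; lra);
  assert (0 <= (r - 1.414) * (d * d)) by (apply Rmult_le_pos; nra);
  assert (0 <= (1.415 - r) * (d * d)) by (apply Rmult_le_pos; nra);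
  assert (0 <= (0.2613 - d) * d) by (apply Rmult_le_pos; lra);
  assert (0 <= (0.2613 - d) * (d * d)) by (apply Rmult_le_pos; nra);
  assert (0 <= (r - 1.414) * ((0.2613 - d) * d)) by (apply Rmult_le_pos; nra);
  nra.

Let K := (1 - d) * (1 - d * (2 * sqrt 2 + 1)).
Let P := 1 + d * (2 * sqrt 2 - 3).
Let Q := 3 + d * (2 * sqrt 2 - 3).
Let lambda := 2 * d + (1 - d) * (sqrt 2 / 2).

Lemma c_delta_w21_ineq : (1 + d) * K <= P ^ 2 * (1 - 3 * d).
Proof. unfold K, P. sqrt2_delta_nra. Qed.

Lemma d_delta_w21_ineq : 4 * K <= 2 * Q * (1 - 3 * d).
Proof. unfold K, Q. sqrt2_delta_nra. Qed.

Lemma c_delta_l2_ineq : lambda * (1 + d) * (1 - d * (2 * sqrt 2 + 1)) <= (1 - 3 * d) * P ^ 2.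
Proof. unfold lambda, P. sqrt2_delta_nra. Qed.

Lemma d_delta_l2_ineq :
  (4 * lambda + 2 * (1 - 3 * d)) * (1 - d * (2 * sqrt 2 + 1)) <= 2 * Q * (1 - 3 * d).
Proof. unfold lambda, Q. sqrt2_delta_nra. Qed.

Lemma c_delta_mul : c_delta d * K = 2 * P ^ 2.
Proof.
  assert (Hd2 := delta_lt_0_2613). unfold c_delta, K, P. field. split; [|lra].
  assert (H := sqrt2_bounds). nra.
Qed.

Lemma d_delta_mul : d_delta d * K = 2 * Q * sqrt (1 + d).
Proof.
  assert (Hd2 := delta_lt_0_2613). unfold d_delta, K, Q. field. split; [|lra].
  assert (H := sqrt2_bounds). nra.
Qed.

Lemma K_pos : 0 < K.
Proof. assert (Hd2 := delta_lt_0_2613). unfold K. apply Rmult_lt_0_compat; lra. Qed.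

Lemma c_delta_pos : 0 < c_delta d.
Proof.
  assert (HK := K_pos). assert (HP : 0 < P) by (unfold P; assert (H := sqrt2_bounds); nra).
  assert (H := c_delta_mul). nra.
Qed.

Lemma d_delta_nonneg : 0 <= d_delta d.
Proof.
  assert (HK := K_pos). assert (HQ : 0 < Q) by (unfold Q; assert (H := sqrt2_bounds); nra).
  assert (Hs := sqrt_pos (1 + d)). assert (H := d_delta_mul). nra.
Qed.

Lemma w21_bound_constants W E T : 0 <= E -> 0 <= T ->
  (1 - 3 * d) * W <= 2 * (1 + d) * E + 4 * sqrt (1 + d) * T ->
  W <= c_delta d * E + d_delta d * T.
Proof.
  intros HE HT H. assert (Hd2 := delta_lt_0_2613). assert (HK := K_pos).
  assert (Hs := sqrt_pos (1 + d)).
  assert (C : 2 * (1 + d) <= c_delta d * (1 - 3 * d)).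
  { apply Rmult_le_reg_r with K; [exact HK|].
    replace (c_delta d * (1 - 3 * d) * K) with (c_delta d * K * (1 - 3 * d)) by ring.
    rewrite c_delta_mul. assert (I := c_delta_w21_ineq). lra. }
  assert (D : 4 * sqrt (1 + d) <= d_delta d * (1 - 3 * d)).
  { apply Rmult_le_reg_r with K; [exact HK|].
    replace (d_delta d * (1 - 3 * d) * K) with (d_delta d * K * (1 - 3 * d)) by ring.
    rewrite d_delta_mul. assert (I := d_delta_w21_ineq). nra. }
  apply Rmult_le_reg_l with (1 - 3 * d); [lra|]. nra.
Qed.

Lemma l2_bound_constants V W E T : 0 <= E -> 0 <= T ->
  (1 - d) * V <= lambda * W + 2 * sqrt (1 + d) * T ->
  (1 - 3 * d) * W <= 2 * (1 + d) * E + 4 * sqrt (1 + d) * T ->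
  V <= c_delta d * E + d_delta d * T.
Proof.
  intros HE HT HV HW. assert (Hd2 := delta_lt_0_2613). assert (HK := K_pos).
  assert (Hs := sqrt_pos (1 + d)).
  assert (Hl : 0 <= lambda) by (unfold lambda; assert (H := sqrt2_bounds); nra).
  assert (HK' : 0 < 1 - d * (2 * sqrt 2 + 1)) by lra.
  assert (C : lambda * (2 * (1 + d)) <= (1 - d) * (1 - 3 * d) * c_delta d).
  { apply Rmult_le_reg_r with K; [exact HK|].
    replace ((1 - d) * (1 - 3 * d) * c_delta d * K) with ((1 - d) * (1 - 3 * d) * (c_delta d * K))
      by ring.
    rewrite c_delta_mul. unfold K. assert (I := c_delta_l2_ineq). nra. }
  assert (D : lambda * (4 * sqrt (1 + d)) + 2 * sqrt (1 + d) * (1 - 3 * d)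
              <= (1 - d) * (1 - 3 * d) * d_delta d).
  { apply Rmult_le_reg_r with K; [exact HK|].
    replace ((1 - d) * (1 - 3 * d) * d_delta d * K) with ((1 - d) * (1 - 3 * d) * (d_delta d * K))
      by ring.
    rewrite d_delta_mul. unfold K. assert (I := d_delta_l2_ineq).
    assert (Hpos : 0 <= (1 - d) * sqrt (1 + d)) by (apply Rmult_le_pos; lra).
    assert (J := Rmult_le_compat_l _ _ _ Hpos I). lra. }
  apply Rmult_le_reg_l with ((1 - d) * (1 - 3 * d)); [apply Rmult_lt_0_compat; lra|].
  assert (lambda * ((1 - 3 * d) * W) <= lambda * (2 * (1 + d) * E + 4 * sqrt (1 + d) * T))
    by (apply Rmult_le_compat_l; assumption).
  nra.
Qed.

End Constants.

Lemma Rinv_nonneg x : 0 <= x -> 0 <= / x.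
Proof.
  intros H. destruct (Req_dec x 0) as [->|Hx]; [rewrite Rinv_0; lra|].
  left. apply Rinv_0_lt_compat. lra.
Qed.

Lemma le_of_le_add_eps_mul a b c : 0 <= c -> (forall e, 0 < e -> a <= b + e * c) -> a <= b.
Proof.
  intros Hc H. apply Rle_plus_epsilon. intros eps Heps.
  assert (He : 0 < eps / (c + 1)) by (apply Rdiv_lt_0_compat; lra).
  assert (H1 := H _ He).
  assert (eps / (c + 1) * c <= eps).
  { replace eps with (eps / (c + 1) * (c + 1)) at 2 by (field; lra). nra. }
  lra.
Qed.

Lemma Rinf_is_glb (E : R -> Prop) :
  (exists x, E x) -> (forall x, E x -> 0 <= x) -> is_glb E (Rinf E).
Proof.
  intros [x0 Hx0] Hpos. unfold Rinf. apply epsilon_spec.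
  destruct (completeness (fun y => E (- y))) as [M [HM1 HM2]].
  - exists 0. intros y Hy. specialize (Hpos _ Hy). lra.
  - exists (- x0). now rewrite Ropp_involutive.
  - exists (- M). split.
    + intros x Hx. assert (H := HM1 (- x)). cbv beta in H. rewrite Ropp_involutive in H.
      specialize (H Hx). lra.
    + intros m' Hm'. enough (M <= - m') by lra.
      apply HM2. intros y Hy. specialize (Hm' _ Hy). lra.
Qed.

Lemma delta_t_rip N B blk w m A t : (exists d, WBRIP N B blk w m A t d) ->
  0 <= delta_t N B blk w m A t /\ rip_bounds N B blk w m A t (delta_t N B blk w m A t).
Proof.
  intros Hex. set (d := delta_t N B blk w m A t).
  assert (Hglb : is_glb (WBRIP N B blk w m A t) d).
  { apply Rinf_is_glb; [exact Hex|]. intros z [_ [Hz _]]. lra. }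
  destruct Hglb as [Hlow Hgreat].
  assert (Hd : 0 <= d) by (apply Hgreat; intros z [_ [Hz _]]; lra).
  assert (Happrox : forall eps, 0 < eps -> exists dd, WBRIP N B blk w m A t dd /\ dd < d + eps).
  { intros eps Heps. apply NNPP. intros Hno. enough (d + eps <= d) by lra.
    apply Hgreat. intros z Hz. apply Rnot_lt_le. intros Hlt. apply Hno. now exists z. }
  split; [exact Hd|]. intros u Hu. assert (H0 := pow2_ge_0 (norm2 N u)). split.
  - apply (le_of_le_add_eps_mul _ _ (norm2 N u ^ 2) H0). intros eps Heps.
    destruct (Happrox eps Heps) as [dd [[_ [_ Hdd]] Hlt]].
    destruct (Hdd u Hu) as [H1 _]. nra.
  - apply (le_of_le_add_eps_mul _ _ (norm2 N u ^ 2) H0). intros eps Heps.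
    destruct (Happrox eps Heps) as [dd [[_ [_ Hdd]] Hlt]].
    destruct (Hdd u Hu) as [_ H2]. nra.
Qed.

Lemma le_sigma_s N B blk w s x c X Y : (forall b, (b < B)%nat -> 1 <= w b) -> 0 <= s -> 0 <= c ->
  (forall z, w0norm N B blk w z <= s -> X <= c * w21norm N B blk w (vsub x z) + Y) ->
  X <= c * sigma_s N B blk w s x + Y.
Proof.
  intros Hw Hs Hc H.
  assert (Hzero : w0norm N B blk w (fun _ => 0) <= s) by (rewrite w0norm_zero; exact Hs).
  assert (Hglb : is_glb (fun r => exists z, w0norm N B blk w z <= s /\ r = w21norm N B blk w (vsub x z))
                   (sigma_s N B blk w s x)).
  { apply Rinf_is_glb; [now exists (w21norm N B blk w (vsub x (fun _ => 0))), (fun _ => 0)|].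
    intros r [z [_ ->]]. now apply w21norm_nonneg. }
  destruct Hglb as [Hlow Hgreat].
  destruct (Req_dec c 0) as [->|Hc0].
  - assert (H1 := H _ Hzero). lra.
  - assert ((X - Y) / c <= sigma_s N B blk w s x).
    { apply Hgreat. intros r [z [Hz ->]]. specialize (H z Hz).
      apply Rmult_le_reg_r with c; [lra|]. replace ((X - Y) / c * c) with (X - Y) by (field; lra).
      lra. }
    apply Rmult_le_compat_r with (r := c) in H0; [|lra].
    replace ((X - Y) / c * c) with (X - Y) in H0 by (field; lra). lra.
Qed.

Lemma wmax_ge B w b : (b < B)%nat -> w b <= wmax B w.
Proof.
  induction B as [|B IH]; intros Hb; [lia|]. simpl. destruct (Nat.eq_dec b B) as [->|Hne].
  - apply Rmax_r.
  - eapply Rle_trans; [apply IH; lia | apply Rmax_l].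
Qed.

Lemma recovery_error_bounds_sparse m N B A blk w s x e xhat eta d z :
  (forall j, (j < N)%nat -> (blk j < B)%nat) ->
  (forall b, (b < B)%nat -> 1 <= w b) ->
  s >= 2 * wmax B w ^ 2 ->
  0 <= d -> d * (2 * sqrt 2 + 1) < 1 ->
  rip_bounds N B blk w m A (2 * s) d ->
  norm2 m e <= eta ->
  norm2 m (vsub (matvec N A xhat) (vadd (matvec N A x) e)) <= eta ->
  (forall z, norm2 m (vsub (matvec N A z) (vadd (matvec N A x) e)) <= eta ->
     w21norm N B blk w xhat <= w21norm N B blk w z) ->
  w0norm N B blk w z <= s ->
  w21norm N B blk w (vsub x xhat) <= c_delta d * w21norm N B blk w (vsub x z) + d_delta d * sqrt s * eta /\
  norm2 N (vsub x xhat) <= c_delta d / sqrt s * w21norm N B blk w (vsub x z) + d_delta d * eta.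
Proof.
  intros Hblk Hw Hs Hd Hdb HRIP He Hfeas Hmin Hz.
  assert (Heta : 0 <= eta) by (assert (H := norm2_nonneg m e); lra).
  assert (Hc := c_delta_pos d Hd Hdb). assert (Hdd := d_delta_nonneg d Hd Hdb).
  assert (Hd3 : d < 1 / 3) by (assert (H := delta_lt_0_2613 d Hdb); lra).
  assert (HE := w21norm_nonneg N B blk w Hw (vsub x z)).
  destruct (Nat.eq_dec B 0) as [->|HB].
  - assert (HN : N = 0%nat) by (destruct N; [reflexivity | specialize (Hblk 0%nat ltac:(lia)); lia]).
    subst N. change (w21norm 0 0 blk w (vsub x xhat)) with 0.
    change (w21norm 0 0 blk w (vsub x z)) with 0.
    replace (norm2 0 (vsub x xhat)) with 0 by (symmetry; apply sqrt_0).
    assert (0 <= d_delta d * sqrt s * eta) by (apply Rmult_le_pos; [apply Rmult_le_pos; [|apply sqrt_pos]|]; lra).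
    assert (0 <= d_delta d * eta) by (apply Rmult_le_pos; lra).
    split; lra.
  - assert (Hw1 : 1 <= wmax B w) by (eapply Rle_trans; [apply (Hw 0%nat); lia | apply wmax_ge; lia]).
    assert (Hs0 : 0 < s) by (assert (1 <= wmax B w ^ 2) by nra; lra).
    assert (Hws : forall b, (b < B)%nat -> w b ^ 2 <= s / 2).
    { intros b Hb. assert (H1 := Hw b Hb). assert (H2 := wmax_ge B w b Hb). nra. }
    assert (Hs1 : 0 < sqrt s) by (apply sqrt_lt_R0, Hs0).
    assert (HT : 0 <= sqrt s * eta) by (apply Rmult_le_pos; lra).
    assert (Hw21 := w21_error_estimate m N B A blk w s d x e xhat eta Hblk Hw Hd Hd3 Hs0 Hws HRIP
                      He Hfeas Hmin z Hz).
    assert (Hl2 := l2_error_estimate m N B A blk w s d x e xhat eta Hblk Hw Hd Hd3 Hs0 Hws HRIP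
                     He Hfeas).
    split.
    + rewrite Rmult_assoc. now apply w21_bound_constants.
    + assert (H := l2_bound_constants d Hd Hdb _ _ _ _ HE HT Hl2 Hw21).
      apply Rmult_le_reg_l with (sqrt s); [exact Hs1|].
      replace (sqrt s * (c_delta d / sqrt s * w21norm N B blk w (vsub x z) + d_delta d * eta))
        with (c_delta d * w21norm N B blk w (vsub x z) + d_delta d * (sqrt s * eta)) by (field; lra).
      exact H.
Qed.

Theorem mainTheorem7
  (m N B : nat) (A : nat -> nat -> R) (blk : nat -> nat) (w : nat -> R) (s : R)
  (x e xhat : nat -> R) (eta : R) :
  is_block_structure N B blk ->
  (forall b, (b < B)%nat -> 1 <= w b) ->
  s >= 2 * wmax B w ^ 2 ->
  (exists d, WBRIP N B blk w m A (2 * s) d) ->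
  delta_t N B blk w m A (2 * s) < 1 / (2 * sqrt 2 + 1) ->
  norm2 m e <= eta ->
  norm2 m (vsub (matvec N A xhat) (vadd (matvec N A x) e)) <= eta ->
  (forall z, norm2 m (vsub (matvec N A z) (vadd (matvec N A x) e)) <= eta ->
     w21norm N B blk w xhat <= w21norm N B blk w z) ->
  let d := delta_t N B blk w m A (2 * s) in
  let c_d := 2 * (1 + d * (2 * sqrt 2 - 3)) ^ 2 /
             ((1 - d) * (1 - d * (2 * sqrt 2 + 1))) in
  let d_d := 2 * (3 + d * (2 * sqrt 2 - 3)) * sqrt (1 + d) /
             ((1 - d) * (1 - d * (2 * sqrt 2 + 1))) in
  w21norm N B blk w (vsub x xhat) <= c_d * sigma_s N B blk w s x + d_d * sqrt s * eta /\
  norm2 N (vsub x xhat) <= c_d / sqrt s * sigma_s N B blk w s x + d_d * eta.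
Proof.
  intros [Hblk _] Hw Hs Hex Hlt He Hfeas Hmin d c_d d_d.
  destruct (delta_t_rip N B blk w m A (2 * s) Hex) as [Hd HRIP].
  assert (Hdb : d * (2 * sqrt 2 + 1) < 1).
  { assert (H := sqrt_pos 2). apply Rmult_lt_compat_r with (r := 2 * sqrt 2 + 1) in Hlt; [|lra].
    replace (1 / (2 * sqrt 2 + 1) * (2 * sqrt 2 + 1)) with 1 in Hlt by (field; lra). exact Hlt. }
  assert (Hs0 : 0 <= s) by (assert (H := pow2_ge_0 (wmax B w)); lra).
  assert (Hc := c_delta_pos d Hd Hdb).
  assert (Hbounds := recovery_error_bounds_sparse m N B A blk w s x e xhat eta d).
  split.
  - apply le_sigma_s; [exact Hw | exact Hs0 | left; exact Hc |]. intros z Hz. now apply Hbounds.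
  - apply le_sigma_s; [exact Hw | exact Hs0 | |].
    + (* s = 0 is possible when there are no blocks, and then / sqrt s = 0 *)
      apply Rmult_le_pos; [left; exact Hc | apply Rinv_nonneg, sqrt_pos].
    + intros z Hz. now apply Hbounds.
Qed.
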